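(* For each order function $h$ there exists an order function $g$ such that every $\mathrm{DNR}_g$ function computes (is Turing-reducible to... i.e., Turing-computes) an $\mathrm{SNPR}_h$ function. That is, for every $f\in\mathrm{DNR}_g$ there is $j\le_T f$ with $j\in\mathrm{SNPR}_h$.
   Context: $\varphi_e$ denotes the $e$-th partial recursive function. A function $f:\omega\to\omega$ is DNR (diagonally non-recursive) if $f(e)\neq\varphi_e(e)$ for every $e$ such that $\varphi_e(e)$ is defined. A function $f:\omega\to\omega$ is strongly non-partial-recursive (SNPR) if for every partial recursive function $\psi$, for all but finitely many $n$, if $\psi(n)$ is defined then $f(n)\neq\psi(n)$. An order function is a recursive, nondecreasing, unbounded function $h:\omega\to\omega$ with $h(0)\ge 2$. For a class $\mathrm{C}$ of functions $\omega\to\omega$ and an order function $h$, $\mathrm{C}_h$ denotes the subclass of members of $\mathrm{C}$ bounded by $h$ (i.e., $f(n)<h(n)$ for all $n$). *)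

From Stdlib Require Import Arith Cantor.

Definition pair (x y : nat) : nat := Cantor.to_nat (x, y).
Definition unpair (n : nat) : nat * nat := Cantor.of_nat n.

(* Syntax of unary partial recursive functionals (with one oracle call
   primitive), in the standard pairing-based basis. *)
Inductive code : Type :=
| CZero : code
| CSucc : code
| CFst : code
| CSnd : code
| COrac : code
| CComp : code -> code -> code (* CComp f g = f o g *)
| CPair : code -> code -> code
| CRec : code -> code -> code  (* primitive recursion on the second component *)
| CMu : code -> code.

Inductive eval (o : nat -> nat) : code -> nat -> nat -> Prop :=
| ev_zero x : eval o CZero x 0
| ev_succ x : eval o CSucc x (S x)
| ev_fst x : eval o CFst x (fst (unpair x))
| ev_snd x : eval o CSnd x (snd (unpair x))
| ev_orac x : eval o COrac x (o x)
| ev_comp f g x y z : eval o g x y -> eval o f y z -> eval o (CComp f g) x z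
| ev_pair f g x a b : eval o f x a -> eval o g x b -> eval o (CPair f g) x (pair a b)
| ev_rec0 f g x a : eval o f x a -> eval o (CRec f g) (pair x 0) a
| ev_recS f g x n a b :
    eval o (CRec f g) (pair x n) a ->
    eval o g (pair x (pair n a)) b ->
    eval o (CRec f g) (pair x (S n)) b
| ev_mu f x n :
    eval o f (pair x n) 0 ->
    (forall m, m < n -> exists v, v <> 0 /\ eval o f (pair x m) v) ->
    eval o (CMu f) x n.

(* Goedel numbering: a computable surjection nat -> code.  The fuel argument
   only ensures structural termination (fuel n suffices for decoding n). *)
Fixpoint decode_fuel (fuel n : nat) : code :=
  match fuel with
  | 0 => CZero
  | S k =>
    let r := n / 9 in
    let p := unpair r in
    match n mod 9 with
    | 0 => CZero
    | 1 => CSucc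
    | 2 => CFst
    | 3 => CSnd
    | 4 => COrac
    | 5 => CComp (decode_fuel k (fst p)) (decode_fuel k (snd p))
    | 6 => CPair (decode_fuel k (fst p)) (decode_fuel k (snd p))
    | 7 => CRec (decode_fuel k (fst p)) (decode_fuel k (snd p))
    | _ => CMu (decode_fuel k r)
    end
  end.

Definition decode (e : nat) : code := decode_fuel (S e) e.

(* The empty oracle (partial recursive = computable without oracle). *)
Definition no_oracle : nat -> nat := fun _ => 0.

Definition phi (e n v : nat) : Prop := eval no_oracle (decode e) n v.

(* A partial function psi : nat -> nat given by its graph; partial recursive
   iff it is some phi_e. *)
Definition partial_recursive (psi : nat -> nat -> Prop) : Prop :=
  exists e, forall n v, psi n v <-> phi e n v.

Definition recursive (h : nat -> nat) : Prop :=
  exists e, forall n, phi e n (h n).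

Definition turing_reducible (j f : nat -> nat) : Prop :=
  exists p : code, forall n, eval f p n (j n).

Definition order_function (h : nat -> nat) : Prop :=
  recursive h /\
  (forall m n, m <= n -> h m <= h n) /\
  (forall b, exists n, b <= h n) /\
  2 <= h 0.

Definition DNR (f : nat -> nat) : Prop :=
  forall e v, phi e e v -> f e <> v.

Definition SNPR (f : nat -> nat) : Prop :=
  forall psi : nat -> nat -> Prop, partial_recursive psi ->
    exists N, forall n v, N <= n -> psi n v -> f n <> v.

Definition bounded_by (h f : nat -> nat) : Prop := forall n, f n < h n.

From Stdlib Require Import Arith Cantor Lia List Bool.

(* Given the order function h, let L(n) be the largest L <= n such that L-tuples of
   numbers below L + 2 have codes below h(n).  Computing with a DNR oracle f, j(n) codes
   the L(n)-tuple whose entry for k < L(n) is f at the index of a program that ignores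
   its input and outputs one fixed component of phi_k(n).  If phi_k(n) = j(n) with
   k < L(n), that program's diagonal value equals f at its own index, contradicting DNR;
   as L is unbounded, each phi_k agrees with j only finitely often.  All queries made at
   stage n lie below c(n), the index for k = n, stage n and component n, so taking
   g(m) = L(l) + 2 for l the least stage with m <= c(l) bounds the entries of j(n) by
   L(n) + 2, whence j(n) < h(n). *)

Definition pi1 (x : nat) : nat := fst (unpair x).
Definition pi2 (x : nat) : nat := snd (unpair x).

Lemma unpair_pair a b : unpair (pair a b) = (a, b).
Proof. exact (cancel_of_to (a, b)). Qed.

Lemma pi1_pair a b : pi1 (pair a b) = a.
Proof. unfold pi1. now rewrite unpair_pair. Qed.

Lemma pi2_pair a b : pi2 (pair a b) = b.
Proof. unfold pi2. now rewrite unpair_pair. Qed.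

Lemma pair_pi x : pair (pi1 x) (pi2 x) = x.
Proof. unfold pair, pi1, pi2, unpair. rewrite <- surjective_pairing. apply cancel_to_of. Qed.

Lemma pair_spec a b : pair a b * 2 = b * 2 + (b + a) * S (b + a).
Proof. apply to_nat_spec. Qed.

Lemma pair_ge a b : a + b <= pair a b.
Proof. pose proof (to_nat_non_decreasing a b). unfold pair. lia. Qed.

Lemma pair_le a b a' b' : a <= a' -> b <= b' -> pair a b <= pair a' b'.
Proof. intros. pose proof (pair_spec a b). pose proof (pair_spec a' b'). nia. Qed.

Lemma pair_lt_l a a' b : a < a' -> pair a b < pair a' b.
Proof. intros. pose proof (pair_spec a b). pose proof (pair_spec a' b). nia. Qed.

Lemma pi_le x : pi1 x <= x /\ pi2 x <= x.
Proof. pose proof (pair_ge (pi1 x) (pi2 x)) as H. rewrite pair_pi in H. lia. Qed.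

Definition computable (o : nat -> nat) (F : nat -> nat) : Prop :=
  exists p, forall x, eval o p x (F x).

Definition computable2 (o : nat -> nat) (f : nat -> nat -> nat) : Prop :=
  computable o (fun x => f (pi1 x) (pi2 x)).

Definition computable3 (o : nat -> nat) (f : nat -> nat -> nat -> nat) : Prop :=
  computable o (fun x => f (pi1 x) (pi1 (pi2 x)) (pi2 (pi2 x))).

(* The least [m < k] with [P m], and [k] when there is none. *)
Fixpoint least (P : nat -> bool) (k : nat) : nat :=
  match k with 0 => 0 | S k => if P (least P k) then least P k else S k end.

Lemma least_le P k : least P k <= k.
Proof. induction k; cbn; [lia|]. destruct (P (least P k)); lia. Qed.

Lemma least_cases P k : least P k = k \/ P (least P k) = true.
Proof. induction k; cbn; auto. destruct (P (least P k)) eqn:E; auto. Qed.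

Lemma least_spec P k : P k = true -> P (least P k) = true.
Proof. intro Hk. now destruct (least_cases P k) as [->|]. Qed.

Lemma least_min P k m : m < least P k -> P m = false.
Proof.
  induction k; cbn; [lia|]. destruct (P (least P k)) eqn:E; [auto|]. intro Hm.
  destruct (least_cases P k) as [Hk|]; [|congruence].
  destruct (Nat.eq_dec m k) as [->|]; [congruence|]. apply IHk. lia.
Qed.

Lemma least_le_of P k m : P m = true -> least P k <= m.
Proof.
  intro Hm. destruct (Nat.le_gt_cases (least P k) m) as [|Hlt]; [auto|].
  now rewrite (least_min P k m Hlt) in Hm.
Qed.

Section Closure.
Variable o : nat -> nat.

Lemma computable_ext F G : computable o F -> (forall x, F x = G x) -> computable o G.
Proof. intros [p Hp] E. exists p. intro x. rewrite <- E. apply Hp. Qed.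

Lemma computable_zero : computable o (fun _ => 0).
Proof. exists CZero. constructor. Qed.

Lemma computable_succ : computable o S.
Proof. exists CSucc. constructor. Qed.

Lemma computable_pi1 : computable o pi1.
Proof. exists CFst. constructor. Qed.

Lemma computable_pi2 : computable o pi2.
Proof. exists CSnd. constructor. Qed.

Lemma computable_oracle : computable o o.
Proof. exists COrac. constructor. Qed.

Lemma computable_comp F G : computable o F -> computable o G -> computable o (fun x => F (G x)).
Proof. intros [p Hp] [q Hq]. exists (CComp p q). intro x. econstructor; eauto. Qed.

Lemma computable_pair F G :
  computable o F -> computable o G -> computable o (fun x => pair (F x) (G x)).
Proof. intros [p Hp] [q Hq]. exists (CPair p q). intro x. constructor; auto. Qed.

Lemma computable_app2 f F G : computable2 o f -> computable o F -> computable o G ->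
  computable o (fun x => f (F x) (G x)).
Proof.
  intros Hf HF HG. eapply computable_ext.
  - apply (computable_comp _ _ Hf (computable_pair _ _ HF HG)).
  - intro x. cbv beta. now rewrite pi1_pair, pi2_pair.
Qed.

Lemma computable_app3 f F G H : computable3 o f ->
  computable o F -> computable o G -> computable o H ->
  computable o (fun x => f (F x) (G x) (H x)).
Proof.
  intros Hf HF HG HH. eapply computable_ext.
  - apply (computable_comp _ _ Hf (computable_pair _ _ HF (computable_pair _ _ HG HH))).
  - intro x. cbv beta. now rewrite !pi2_pair, !pi1_pair.
Qed.

Lemma computable_id : computable o (fun x => x).
Proof.
  eapply computable_ext. apply (computable_pair _ _ computable_pi1 computable_pi2).
  apply pair_pi.
Qed.

Lemma computable_const n : computable o (fun _ => n).
Proof.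
  induction n.
  - apply computable_zero.
  - apply (computable_comp S _ computable_succ IHn).
Qed.

Lemma computable_rec F G : computable o F -> computable3 o G ->
  computable2 o (fun x n => nat_rec (fun _ => nat) (F x) (G x) n).
Proof.
  unfold computable3. intros [p Hp] [q Hq]. exists (CRec p q). intro y.
  rewrite <- (pair_pi y) at 1. generalize (pi1 y) (pi2 y). clear y. intros x n.
  induction n; cbn.
  - constructor. apply Hp.
  - eapply ev_recS; [apply IHn|]. specialize (Hq (pair x (pair n (nat_rec _ (F x) (G x) n)))).
    cbv beta in Hq. now rewrite !pi2_pair, !pi1_pair in Hq.
Qed.

Lemma computable2_ext f g : computable2 o f -> (forall a b, f a b = g a b) -> computable2 o g.
Proof. intros Hf E. eapply computable_ext; [exact Hf|]. intro. apply E. Qed.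

Lemma computable_least t P B : computable2 o t ->
  (forall x m, t x m = 0 <-> P x m = true) -> (forall x, P x (B x) = true) ->
  computable o (fun x => least (P x) (B x)).
Proof.
  intros [p Hp] Ht HB. exists (CMu p). intro x.
  assert (Hev : forall m, eval o p (pair x m) (t x m)).
  { intro m. specialize (Hp (pair x m)). cbv beta in Hp. now rewrite pi1_pair, pi2_pair in Hp. }
  constructor.
  - rewrite <- (proj2 (Ht x _) (least_spec _ _ (HB x))). apply Hev.
  - intros m Hm. exists (t x m). split; [|apply Hev].
    intro Hz. apply Ht in Hz. now rewrite (least_min _ _ _ Hm) in Hz.
Qed.
End Closure.

Create HintDb computable.
#[export] Hint Resolve computable_succ computable_pi1 computable_pi2 computable_oracle : computable.

(* Proves [computable o F] by splitting [F] at its head symbol, which must be a hint. *)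
Ltac computability :=
  unfold computable2, computable3; cbv beta;
  repeat match goal with
  | |- computable _ _ => solve [auto with computable]
  | |- computable _ (fun _ => ?c) => apply computable_const
  | |- computable _ (fun x => x) => apply computable_id
  | |- computable ?o (fun x => ?f (@?A x) (@?B x) (@?C x)) =>
      apply (computable_app3 o f A B C); [solve [auto with computable] | | |]
  | |- computable ?o (fun x => ?f (@?A x) (@?B x)) =>
      apply (computable_app2 o f A B); [solve [auto with computable] | |]
  | |- computable ?o (fun x => ?f (@?A x)) =>
      apply (computable_comp o f A); [solve [auto with computable] |]
  end.

Lemma computable_nat_rec o c G : computable2 o G ->
  computable o (fun n => nat_rec (fun _ => nat) c G n).
Proof.
  intro HG.
  assert (Hrec : computable2 o (fun _ n => nat_rec (fun _ => nat) c G n)).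
  { apply (computable_rec o (fun _ => c) (fun _ => G)); computability. }
  eapply computable_ext.
  - apply (computable_app2 o _ _ _ Hrec (computable_const o 0) (computable_id o)).
  - reflexivity.
Qed.

Lemma computable_add o : computable2 o Nat.add.
Proof.
  eapply computable2_ext.
  - apply (computable_rec o (fun a => a) (fun _ _ s => S s)); computability.
  - intros a b. induction b; cbn; lia.
Qed.
#[export] Hint Resolve computable_add : computable.

Lemma computable_mul o : computable2 o Nat.mul.
Proof.
  eapply computable2_ext.
  - apply (computable_rec o (fun _ => 0) (fun a _ s => s + a)); computability.
  - intros a b. induction b; cbn; lia.
Qed.
#[export] Hint Resolve computable_mul : computable.

Lemma computable_pred o : computable o pred.
Proof.
  eapply computable_ext.
  - apply (computable_nat_rec o 0 (fun k _ => k)). computability.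
  - now intros [|n].
Qed.
#[export] Hint Resolve computable_pred : computable.

Lemma computable_sub o : computable2 o Nat.sub.
Proof.
  eapply computable2_ext.
  - apply (computable_rec o (fun a => a) (fun _ _ s => pred s)); computability.
  - intros a b. induction b; cbn; lia.
Qed.
#[export] Hint Resolve computable_sub : computable.

Lemma computable_cantor_pair o : computable2 o pair.
Proof.
  (* [Cantor.to_nat (a, b)] is by definition [b + T (b + a)], [T] the triangular numbers. *)
  assert (Htri : computable o (nat_rec (fun _ => nat) 0 (fun i m => S i + m))).
  { apply computable_nat_rec. computability. }
  apply (computable2_ext o (fun a b => b + nat_rec (fun _ => nat) 0 (fun i m => S i + m) (b + a)));
    [computability | reflexivity].
Qed.
#[export] Hint Resolve computable_cantor_pair : computable.

Definition decode_step (dec : nat -> code) (n : nat) : code :=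
  let r := n / 9 in
  match n mod 9 with
  | 0 => CZero
  | 1 => CSucc
  | 2 => CFst
  | 3 => CSnd
  | 4 => COrac
  | 5 => CComp (dec (pi1 r)) (dec (pi2 r))
  | 6 => CPair (dec (pi1 r)) (dec (pi2 r))
  | 7 => CRec (dec (pi1 r)) (dec (pi2 r))
  | _ => CMu (dec r)
  end.

Lemma decode_fuel_S k n : decode_fuel (S k) n = decode_step (decode_fuel k) n.
Proof. reflexivity. Qed.

Lemma decode_step_ext dec dec' n : 0 < n -> (forall m, m < n -> dec m = dec' m) ->
  decode_step dec n = decode_step dec' n.
Proof.
  intros Hn E. unfold decode_step.
  assert (Hr : n / 9 < n) by (apply Nat.div_lt; lia).
  destruct (pi_le (n / 9)). rewrite !E by lia. reflexivity.
Qed.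

Lemma decode_fuel_enough n k : n < k -> decode_fuel k n = decode n.
Proof.
  revert k. induction n as [n IH] using lt_wf_ind. intros [|k] Hk; [lia|].
  unfold decode. rewrite !decode_fuel_S. destruct n as [|n]; [reflexivity|].
  apply decode_step_ext; [lia|]. intros m Hm. rewrite !IH; auto; lia.
Qed.

Lemma decode_unfold n : 0 < n -> decode n = decode_step decode n.
Proof.
  intro Hn. unfold decode at 1. rewrite decode_fuel_S.
  apply decode_step_ext; auto. intros m Hm. apply decode_fuel_enough. lia.
Qed.

Lemma decode_mod9 q r : 0 < r < 9 ->
  decode (9 * q + r) =
  match r with
  | 5 => CComp (decode (pi1 q)) (decode (pi2 q))
  | 6 => CPair (decode (pi1 q)) (decode (pi2 q))
  | 7 => CRec (decode (pi1 q)) (decode (pi2 q))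
  | 8 => CMu (decode q)
  | _ => decode r
  end.
Proof.
  intro Hr. rewrite decode_unfold by lia. unfold decode_step.
  replace ((9 * q + r) / 9) with q by (apply (Nat.div_unique _ _ _ r); lia).
  replace ((9 * q + r) mod 9) with r by (apply (Nat.mod_unique _ _ q); lia).
  do 9 (destruct r as [|r]; try reflexivity). lia.
Qed.

Fixpoint enc (c : code) : nat :=
  match c with
  | CZero => 0
  | CSucc => 1
  | CFst => 2
  | CSnd => 3
  | COrac => 4
  | CComp a b => 9 * pair (enc a) (enc b) + 5
  | CPair a b => 9 * pair (enc a) (enc b) + 6
  | CRec a b => 9 * pair (enc a) (enc b) + 7
  | CMu a => 9 * enc a + 8
  end.

Lemma decode_enc c : decode (enc c) = c.
Proof.
  induction c; cbn [enc]; try reflexivity;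
    rewrite decode_mod9 by lia; rewrite ?pi1_pair, ?pi2_pair; congruence.
Qed.

Fixpoint strip (c : code) : code :=
  match c with
  | COrac => CZero
  | CComp a b => CComp (strip a) (strip b)
  | CPair a b => CPair (strip a) (strip b)
  | CRec a b => CRec (strip a) (strip b)
  | CMu a => CMu (strip a)
  | c => c
  end.

Lemma eval_strip o : forall c x y, eval no_oracle c x y -> eval o (strip c) x y.
Proof.
  (* The premise of [ev_mu] is nested under a quantifier, so [induction] gives no
     hypothesis for it; structural recursion does. *)
  fix IH 4. intros c x y H. destruct H; cbn [strip].
  1-5: constructor.
  - econstructor; apply IH; eassumption.
  - constructor; apply IH; assumption.
  - constructor. apply IH. assumption.
  - eapply ev_recS; [exact (IH _ _ _ H) | exact (IH _ _ _ H0)].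
  - constructor; [apply IH; assumption|]. intros m Hm.
    destruct (H0 m Hm) as [v [Hv Hev]]. exists v. split; [exact Hv | apply IH, Hev].
Qed.

Lemma recursive_computable o h : recursive h -> computable o h.
Proof. intros [e He]. exists (strip (decode e)). intro n. apply eval_strip, He. Qed.

Lemma computable_recursive g : computable no_oracle g -> recursive g.
Proof. intros [p Hp]. exists (enc p). intro n. unfold phi. rewrite decode_enc. apply Hp. Qed.

Definition comp_index (a b : nat) : nat := 9 * pair a b + 5.

Lemma decode_comp_index a b : decode (comp_index a b) = CComp (decode a) (decode b).
Proof. unfold comp_index. rewrite decode_mod9 by lia. now rewrite pi1_pair, pi2_pair. Qed.

Fixpoint tup (l : list nat) : nat :=
  match l with nil => 0 | a :: l => pair a (tup l) end.

Fixpoint proj_index (p : nat) : nat :=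
  match p with 0 => enc CFst | S p => comp_index (proj_index p) (enc CSnd) end.

Fixpoint const_index (n : nat) : nat :=
  match n with 0 => enc CZero | S n => comp_index (enc CSucc) (const_index n) end.

Lemma eval_proj_index o p l : p < length l -> eval o (decode (proj_index p)) (tup l) (nth p l 0).
Proof.
  revert l. induction p; intros [|a l] Hl; cbn [length nth tup proj_index] in Hl |- *; try lia.
  - replace a with (pi1 (pair a (tup l))) at 2 by apply pi1_pair. constructor.
  - rewrite decode_comp_index. eapply ev_comp; [|apply IHp; lia].
    rewrite <- (pi2_pair a (tup l)) at 2. constructor.
Qed.

Lemma eval_const_index o n x : eval o (decode (const_index n)) x n.
Proof.
  induction n; cbn [const_index]; [constructor|].
  rewrite decode_comp_index. econstructor; [apply IHn | constructor].
Qed.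

Definition component_index (i n p : nat) : nat :=
  comp_index (proj_index p) (comp_index i (const_index n)).

Lemma phi_component_index i n p l x : phi i n (tup l) -> p < length l ->
  phi (component_index i n p) x (nth p l 0).
Proof.
  intros Hi Hp. unfold phi, component_index. rewrite !decode_comp_index.
  econstructor; [|apply eval_proj_index, Hp].
  econstructor; [apply eval_const_index | exact Hi].
Qed.

Lemma comp_index_le a b a' b' : a <= a' -> b <= b' -> comp_index a b <= comp_index a' b'.
Proof. intros. unfold comp_index. pose proof (pair_le a b a' b'). lia. Qed.

Lemma comp_index_ge a b : a + b <= comp_index a b.
Proof. unfold comp_index. pose proof (pair_ge a b). lia. Qed.

Lemma proj_index_le p p' : p <= p' -> proj_index p <= proj_index p'.
Proof.
  induction 1; cbn [proj_index]; [lia|].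
  pose proof (comp_index_ge (proj_index m) (enc CSnd)). lia.
Qed.

Lemma const_index_le n n' : n <= n' -> const_index n <= const_index n'.
Proof.
  induction 1; cbn [const_index]; [lia|].
  pose proof (comp_index_ge (enc CSucc) (const_index m)). lia.
Qed.

Lemma component_index_le i n p i' n' p' : i <= i' -> n <= n' -> p <= p' ->
  component_index i n p <= component_index i' n' p'.
Proof.
  intros. unfold component_index.
  auto using comp_index_le, proj_index_le, const_index_le.
Qed.

Lemma component_index_diag_ge n : n <= component_index n n n.
Proof.
  unfold component_index.
  pose proof (comp_index_ge (proj_index n) (comp_index n (const_index n))).
  pose proof (comp_index_ge n (const_index n)). lia.
Qed.

Lemma computable_comp_index o : computable2 o comp_index.
Proof. unfold comp_index. computability. Qed.
#[export] Hint Resolve computable_comp_index : computable.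

Lemma computable_proj_index o : computable o proj_index.
Proof.
  eapply computable_ext.
  - apply (computable_nat_rec o (enc CFst) (fun _ a => comp_index a (enc CSnd))).
    computability.
  - induction x; cbn [nat_rec nat_rect proj_index const_index]; congruence.
Qed.
#[export] Hint Resolve computable_proj_index : computable.

Lemma computable_const_index o : computable o const_index.
Proof.
  eapply computable_ext.
  - apply (computable_nat_rec o (enc CZero) (fun _ a => comp_index (enc CSucc) a)).
    computability.
  - induction x; cbn [nat_rec nat_rect proj_index const_index]; congruence.
Qed.
#[export] Hint Resolve computable_const_index : computable.


Lemma computable_component_index o : computable3 o component_index.
Proof. unfold component_index. computability. Qed.

#[export] Hint Resolve computable_component_index : computable.
Fixpoint tuple_bound (B k : nat) : nat :=
  match k with 0 => 1 | S k => pair B (tuple_bound B k) end.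

Lemma tuple_bound_le B B' k k' : B <= B' -> k <= k' -> tuple_bound B k <= tuple_bound B' k'.
Proof.
  intros HB Hk. transitivity (tuple_bound B' k).
  - clear Hk. induction k; cbn [tuple_bound]; [lia | apply pair_le; auto].
  - induction Hk; cbn [tuple_bound]; [lia|]. pose proof (pair_ge B' (tuple_bound B' m)). lia.
Qed.

Lemma tup_lt_tuple_bound B l : (forall a, In a l -> a < B) -> tup l < tuple_bound B (length l).
Proof.
  induction l as [|a l IH]; intro Hl; cbn; [lia|].
  apply (Nat.lt_le_trans _ (pair B (tup l))).
  - apply pair_lt_l, Hl. now left.
  - apply pair_le, Nat.lt_le_incl, IH; auto. intros b Hb. apply Hl. now right.
Qed.

Lemma computable_tuple_bound o : computable2 o tuple_bound.
Proof.
  eapply computable2_ext.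
  - apply (computable_rec o (fun _ => 1) (fun B _ t => pair B t)); computability.
  - intros B k. induction k; cbn [tuple_bound nat_rec nat_rect]; congruence.
Qed.
#[export] Hint Resolve computable_tuple_bound : computable.

Fixpoint rev_tabulate (F : nat -> nat) (m : nat) : list nat :=
  match m with 0 => nil | S m => F m :: rev_tabulate F m end.

Lemma length_rev_tabulate F m : length (rev_tabulate F m) = m.
Proof. induction m; cbn; auto. Qed.

Lemma nth_rev_tabulate F m p : p < m -> nth p (rev_tabulate F m) 0 = F (m - 1 - p).
Proof.
  revert p. induction m; intros [|p] Hp; cbn [rev_tabulate nth]; try lia.
  - f_equal. lia.
  - rewrite IHm by lia. f_equal. lia.
Qed.

Lemma in_rev_tabulate F m a : In a (rev_tabulate F m) -> exists k, k < m /\ a = F k.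
Proof.
  induction m; cbn; [tauto|]. intros [<-|Ha].
  - exists m. auto.
  - destruct (IHm Ha) as [k [Hk ->]]. exists k. auto.
Qed.

Lemma tup_rev_tabulate F m :
  tup (rev_tabulate F m) = nat_rec (fun _ => nat) 0 (fun k t => pair (F k) t) m.
Proof. induction m; cbn [rev_tabulate tup nat_rec nat_rect]; congruence. Qed.

Definition monotone (h : nat -> nat) : Prop := forall m n, m <= n -> h m <= h n.

(* [width h n] is the largest [L <= n] such that [L]-tuples of numbers below [L + 2]
   are coded below [h n]. *)
Definition too_wide (h : nat -> nat) (n l : nat) : bool :=
  (n <=? l) || (h n <? tuple_bound (S (S (S l))) (S l)).

Definition width (h : nat -> nat) (n : nat) : nat := least (too_wide h n) n.

Lemma too_wide_iff h n l :
  too_wide h n l = true <-> n <= l \/ h n < tuple_bound (S (S (S l))) (S l).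
Proof. unfold too_wide. now rewrite orb_true_iff, Nat.leb_le, Nat.ltb_lt. Qed.

Lemma width_le h n : width h n <= n.
Proof. apply least_le. Qed.

Lemma width_spec h n :
  n <= width h n \/ h n < tuple_bound (S (S (S (width h n)))) (S (width h n)).
Proof. apply too_wide_iff, least_spec, too_wide_iff. lia. Qed.

Lemma width_min h n l : l < width h n -> tuple_bound (S (S (S l))) (S l) <= h n.
Proof.
  intro Hl. pose proof (least_min _ _ _ Hl) as Hf.
  destruct (Nat.le_gt_cases (tuple_bound (S (S (S l))) (S l)) (h n)) as [|Hlt]; [auto|].
  assert (too_wide h n l = true) by (apply too_wide_iff; auto). congruence.
Qed.

Lemma width_fits h n : 1 <= h n -> tuple_bound (S (S (width h n))) (width h n) <= h n.
Proof.
  intro Hn. destruct (width h n) as [|l] eqn:E; [exact Hn|].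
  apply width_min. lia.
Qed.

Lemma width_mono h n n' : monotone h -> n <= n' -> width h n <= width h n'.
Proof.
  intros Hh Hn. destruct (Nat.le_gt_cases (width h n) (width h n')) as [|Hlt]; [auto|].
  pose proof (width_min _ _ _ Hlt). pose proof (width_le h n). pose proof (Hh _ _ Hn).
  destruct (width_spec h n'); lia.
Qed.

Lemma width_unbounded h : monotone h -> (forall b, exists n, b <= h n) ->
  forall L, exists n, L <= width h n.
Proof.
  intros Hh Hu L. destruct (Hu (tuple_bound (S (S L)) L)) as [n0 Hn0].
  exists (Nat.max n0 L).
  destruct (Nat.le_gt_cases L (width h (Nat.max n0 L))) as [|Hlt]; [auto|].
  pose proof (Hh _ _ (Nat.le_max_l n0 L)).
  pose proof (tuple_bound_le (S (S (S (width h (Nat.max n0 L))))) (S (S L))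
    (S (width h (Nat.max n0 L))) L ltac:(lia) ltac:(lia)).
  destruct (width_spec h (Nat.max n0 L)); lia.
Qed.

Lemma computable_width o h : computable o h -> computable o (width h).
Proof.
  intro Hh.
  apply (computable_least o (fun n l => (n - l) * (S (h n) - tuple_bound (S (S (S l))) (S l)))).
  - computability.
  - intros n l. rewrite too_wide_iff, Nat.eq_mul_0. lia.
  - intro n. apply too_wide_iff. lia.
Qed.

Definition level (m : nat) : nat := least (fun n => m <=? component_index n n n) m.

Lemma level_spec m : m <= component_index (level m) (level m) (level m).
Proof.
  apply Nat.leb_le, (least_spec (fun n => m <=? component_index n n n)), Nat.leb_le.
  apply component_index_diag_ge.
Qed.

Lemma level_le m n : m <= component_index n n n -> level m <= n.
Proof. intro H. apply (least_le_of (fun n => m <=? component_index n n n)), Nat.leb_le, H. Qed.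

Lemma level_mono m m' : m <= m' -> level m <= level m'.
Proof. intro H. apply level_le. pose proof (level_spec m'). lia. Qed.

Lemma level_gt n : n < level (S (component_index n n n)).
Proof.
  destruct (Nat.le_gt_cases (level (S (component_index n n n))) n) as [Hle|]; [|auto].
  pose proof (level_spec (S (component_index n n n))).
  pose proof (component_index_le _ _ _ _ _ _ Hle Hle Hle). lia.
Qed.

Lemma computable_level o : computable o level.
Proof.
  apply (computable_least o (fun m n => m - component_index n n n)).
  - computability.
  - intros m n. rewrite Nat.leb_le. lia.
  - intro m. apply Nat.leb_le, component_index_diag_ge.
Qed.

Definition dnr_bound (h : nat -> nat) (m : nat) : nat := S (S (width h (level m))).

(* The entry for [k] sits at position [width h n - 1 - k] and is [f] at the index of the
   program outputting that same position of phi_k(n). *)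
Definition snpr_witness (f h : nat -> nat) (n : nat) : nat :=
  tup (rev_tabulate (fun k => f (component_index k n (width h n - 1 - k))) (width h n)).

Lemma order_function_dnr_bound h : order_function h -> order_function (dnr_bound h).
Proof.
  intros [Hrec [Hh [Hu _]]]. unfold dnr_bound. split; [|split; [|split]].
  - apply computable_recursive. apply recursive_computable with (o := no_oracle) in Hrec.
    pose proof (computable_width _ _ Hrec). pose proof (computable_level no_oracle).
    computability.
  - intros m m' Hm. pose proof (width_mono h _ _ Hh (level_mono _ _ Hm)). lia.
  - intro b. destruct (width_unbounded h Hh Hu b) as [n Hn].
    exists (S (component_index n n n)).
    pose proof (width_mono h _ _ Hh (Nat.lt_le_incl _ _ (level_gt n))). lia.
  - lia.
Qed.

Lemma computable_snpr_witness f h : recursive h -> computable f (snpr_witness f h).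
Proof.
  intro Hrec. apply recursive_computable with (o := f) in Hrec.
  pose proof (computable_width _ _ Hrec) as Hw.
  assert (Hstep : computable2 f (fun n m =>
    nat_rec (fun _ => nat) 0 (fun k t => pair (f (component_index k n (width h n - 1 - k))) t) m)).
  { apply (computable_rec f (fun _ => 0)
      (fun n k t => pair (f (component_index k n (width h n - 1 - k))) t)); computability. }
  eapply computable_ext.
  - apply (computable_app2 f _ (fun n => n) (width h) Hstep); computability.
  - intro n. unfold snpr_witness. now rewrite tup_rev_tabulate.
Qed.

Lemma snpr_witness_SNPR f h : monotone h -> (forall b, exists n, b <= h n) -> DNR f ->
  SNPR (snpr_witness f h).
Proof.
  intros Hh Hu Hf psi [e He]. destruct (width_unbounded h Hh Hu (S e)) as [N HN].
  exists N. intros n v HNn Hpsi Hj. apply He in Hpsi. subst v.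
  unfold snpr_witness in Hpsi. set (L := width h n) in *.
  assert (HL : S e <= L) by (pose proof (width_mono h _ _ Hh HNn); unfold L; lia).
  set (F := fun k => f (component_index k n (L - 1 - k))).
  assert (Hp : L - 1 - e < length (rev_tabulate F L)) by (rewrite length_rev_tabulate; lia).
  pose proof (phi_component_index e n _ _ (component_index e n (L - 1 - e)) Hpsi Hp) as Hphi.
  rewrite nth_rev_tabulate in Hphi by lia.
  replace (L - 1 - (L - 1 - e)) with e in Hphi by lia.
  exact (Hf _ _ Hphi eq_refl).
Qed.

Lemma snpr_witness_bounded f h : monotone h -> 1 <= h 0 -> bounded_by (dnr_bound h) f ->
  bounded_by h (snpr_witness f h).
Proof.
  intros Hh H0 Hf n. unfold snpr_witness. set (L := width h n).
  set (F := fun k => f (component_index k n (L - 1 - k))).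
  assert (Hentries : forall a, In a (rev_tabulate F L) -> a < S (S L)).
  { intros a Ha. destruct (in_rev_tabulate _ _ _ Ha) as [k [Hk ->]].
    apply (Nat.lt_le_trans _ _ _ (Hf _)). unfold dnr_bound.
    do 2 apply le_n_S. apply width_mono; [exact Hh|].
    pose proof (width_le h n). apply level_le, component_index_le; lia. }
  pose proof (tup_lt_tuple_bound _ _ Hentries) as Htup. rewrite length_rev_tabulate in Htup.
  apply (Nat.lt_le_trans _ _ _ Htup), width_fits. pose proof (Hh 0 n). lia.
Qed.

Theorem theorem1 :
  forall h : nat -> nat, order_function h ->
  exists g : nat -> nat, order_function g /\
    forall f : nat -> nat, DNR f -> bounded_by g f ->
      exists j : nat -> nat, turing_reducible j f /\ SNPR j /\ bounded_by h j.
Proof.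
  intros h Horder. exists (dnr_bound h). split; [now apply order_function_dnr_bound|].
  destruct Horder as [Hrec [Hh [Hu H0]]].
  intros f Hf Hbound. exists (snpr_witness f h). split; [|split].
  - exact (computable_snpr_witness f h Hrec).
  - apply snpr_witness_SNPR; assumption.
  - apply snpr_witness_bounded; [exact Hh | lia | exact Hbound].
Qed.
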